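(* Let $S$ be a $d\times d$ symmetric positive semidefinite matrix and $L,U$ symmetric matrices with entries in $\mathbb{R}\cup\{\pm\infty\}$, $L_{ij}\le0\le U_{ij}$ for $i\ne j$ and $L_{ii}=U_{ii}=0$. Let $\widehat K$ be the optimum of minimizing $-\log\det K+\operatorname{tr}(SK)+\sum_{i\neq j}\max\{L_{ij}K_{ij},U_{ij}K_{ij}\}$ over positive definite $K$ (convention $\pm\infty\cdot0=0$), and let $\widehat G$ be the graph on $\{1,\dots,d\}$ with edge $ij$ ($i\neq j$) iff $\widehat K_{ij}\ne0$. For all $(i,j)$ with $\widehat K_{ij}\ne0$ (including $i=j$), define $\widehat S_{ij}=S_{ij}+L_{ij}$ if $\widehat K_{ij}<0$ and $\widehat S_{ij}=S_{ij}+U_{ij}$ if $\widehat K_{ij}>0$. Then $\widehat K$ equals the maximum likelihood estimator in the Gaussian graphical model $M(\widehat G)$ with sufficient statistics $(\widehat S_{ij})$, i.e. the unique positive definite $K$ with $K_{ij}=0$ whenever $i\ne j$ and $ij$ is not an edge of $\widehat G$, and $(K^{-1})_{ij}=\widehat S_{ij}$ whenever $\widehat K_{ij}\ne0$. *)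

From HB Require Import structures.
From mathcomp Require Import all_boot all_order all_algebra.
From mathcomp Require Import all_classical all_reals.
From mathcomp Require Import exp.
Set Implicit Arguments. Unset Strict Implicit. Unset Printing Implicit Defensive.
Import Order.TTheory GRing.Theory Num.Theory.
Local Open Scope ring_scope.

Section Defs.
Variables (R : realType) (d : nat).

Definition symmetric_mx (T : Type) (A : 'M[T]_d) : Prop := A^T = A.

Definition psd (A : 'M[R]_d) : Prop :=
  symmetric_mx A /\ forall x : 'cV[R]_d, 0 <= (x^T *m A *m x) 0 0.

Definition posdef (A : 'M[R]_d) : Prop :=
  symmetric_mx A /\ forall x : 'cV[R]_d, x != 0 -> 0 < (x^T *m A *m x) 0 0.

(* The penalized objective
   -log det K + tr(S K) + sum_{i<>j} max{L_ij K_ij, U_ij K_ij},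
   valued in extended reals; the ereal product satisfies (+-oo) * 0 = 0. *)
Definition pen_obj (S : 'M[R]_d) (L U : 'M[\bar R]_d) (K : 'M[R]_d) : \bar R :=
  ((- ln (\det K) + \tr (S *m K))%:E
   + \sum_(i < d) \sum_(j < d | i != j)
       Order.max (L i j * (K i j)%:E) (U i j * (K i j)%:E))%E.

Definition support_graph (K : 'M[R]_d) (i j : 'I_d) : bool :=
  (i != j) && (K i j != 0).

(* the statistics \hat S_{ij} (only meaningful where K_ij <> 0) *)
Definition adjusted_stat (S : 'M[R]_d) (L U : 'M[\bar R]_d) (K : 'M[R]_d)
  (i j : 'I_d) : \bar R :=
  if K i j < 0 then ((S i j)%:E + L i j)%E else ((S i j)%:E + U i j)%E.

Definition ggm_mle (G : 'I_d -> 'I_d -> bool) (Sh : 'I_d -> 'I_d -> \bar R)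
  (K : 'M[R]_d) : Prop :=
  [/\ posdef K,
      (forall i j, i != j -> ~~ G i j -> K i j = 0) &
      (forall i j, (i == j) || G i j -> ((invmx K) i j)%:E = Sh i j)].

End Defs.

From HB Require Import structures.
From mathcomp Require Import all_boot all_order all_algebra.
From mathcomp Require Import all_classical all_reals.
From mathcomp Require Import exp.
From mathcomp Require Import ring lra zify.
Import Order.TTheory GRing.Theory Num.Theory.
Local Open Scope ring_scope.

(* Positive definite matrices are the Gram matrices C^T C with C invertible
   (Cholesky).  This gives a positive determinant, openness of the positive
   definite cone along every symmetric direction, and tr (A D B D) > 0 for
   positive definite A, B and symmetric D <> 0.
   At the minimizer Khat the penalty is finite, so for Khat_ij <> 0 the bound
   selected by the sign of Khat_ij is finite, and along the directions E_ii and
   E_ij + E_ji the penalty is affine for small steps.  Since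
   det (1 + t M) = 1 + t tr M + O(t^2), the first-order condition at the
   minimum reads (Khat^-1)_ij = S_ij + L_ij or S_ij + U_ij: Khat is the
   maximum likelihood estimate of M(G).  Two such estimates K1, K2 coincide:
   D = K1 - K2 vanishes off the pattern while K1^-1 - K2^-1 = - K1^-1 D K2^-1
   vanishes on it, so tr (K1^-1 D K2^-1 D) = 0 and D = 0. *)

Lemma symmetric_mxE {T : Type} {n} {A : 'M[T]_n} :
  symmetric_mx A -> forall i j, A j i = A i j.
Proof. by move=> Asym i j; rewrite -[in LHS]Asym mxE. Qed.

Section PositiveDefinite.
Context {R : realType}.

Lemma qform_delta {n} (A : 'M[R]_n) i :
  (((delta_mx i 0 : 'cV_n)^T *m A) *m (delta_mx i 0 : 'cV_n)) 0 0 = A i i.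
Proof. by rewrite trmx_delta -rowE -colE !mxE. Qed.

Lemma posdef_diag_gt0 {n} {K : 'M[R]_n} : posdef K -> forall i, 0 < K i i.
Proof.
move=> [_ Kpos] i; rewrite -qform_delta; apply: Kpos.
by apply/eqP => /matrixP/(_ i 0); rewrite !mxE !eqxx => /eqP; rewrite oner_eq0.
Qed.

Lemma posdef_congr {n} (A C : 'M[R]_n) :
  C \in unitmx -> posdef A -> posdef (C^T *m A *m C).
Proof.
move=> Cu [Asym Apos]; split.
  by rewrite /symmetric_mx !trmx_mul trmxK Asym mulmxA.
move=> x x0.
have -> : x^T *m (C^T *m A *m C) *m x = (C *m x)^T *m A *m (C *m x).
  by rewrite trmx_mul !mulmxA.
apply: Apos; apply: contraNneq x0 => Cx0.
by rewrite -(mulKmx Cu x) Cx0 mulmx0.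
Qed.

Lemma posdef_schur {n} {a : R} {b : 'cV[R]_n} {D : 'M[R]_n} :
  posdef (block_mx a%:M b^T b D : 'M_(1 + n)) ->
  0 < a /\ posdef (D - a^-1 *: (b *m b^T)).
Proof.
move=> Bpd; have a0 : 0 < a.
  by have := posdef_diag_gt0 Bpd (lshift n 0); rewrite block_mxEul mxE eqxx.
split=> //; have [Bsym Bpos] := Bpd.
have Dsym : D^T = D.
  by move: Bsym; rewrite /symmetric_mx tr_block_mx => /eq_block_mx[].
split.
  by rewrite /symmetric_mx raddfB /= linearZ /= trmx_mul trmxK Dsym.
move=> z z0; set beta := (b^T *m z) 0 0.
have bz : b^T *m z = beta%:M by rewrite [LHS]mx11_scalar.
have zb : z^T *m b = beta%:M by rewrite -[b]trmxK -trmx_mul bz tr_scalar_mx.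
(* At (-beta/a, z) the square in the first coordinate is completed, leaving
   z^T (D - b b^T / a) z. *)
have := Bpos (col_mx (- a^-1 * beta)%:M z); rewrite col_mx_eq0 negb_and z0 orbT.
move=> /(_ isT); rewrite tr_col_mx mul_row_block mul_row_col tr_scalar_mx.
rewrite !mulmxDl -(mulmxA _ b^T z) bz zb !mul_scalar_mx !scale_scalar_mx.
rewrite mulmxBr mulmxBl -scalemxAr -scalemxAl !mulmxA -(mulmxA (z^T *m b)).
rewrite bz zb mul_scalar_mx scale_scalar_mx !mxE /= !mulr1n big_ord1 !mxE /=.
rewrite mulr1n.
have an0 : a != 0 by rewrite gt_eqF.
by move=> /lt_le_trans; apply; rewrite le_eqVlt; apply/orP; left; apply/eqP;
  field.
Qed.

Lemma symmetric_block_mx {n} {B : 'M[R]_(1 + n)} : symmetric_mx B ->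
  B = block_mx (B 0 0)%:M (dlsubmx B)^T (dlsubmx B) (drsubmx B).
Proof.
move=> Bsym; rewrite -[B in LHS]submxK trmx_dlsub Bsym.
rewrite [ulsubmx B]mx11_scalar !mxE.
by congr (block_mx (B _ _)%:M _ _ _); apply: val_inj.
Qed.

Lemma cholesky {n} {B : 'M[R]_n} :
  posdef B -> exists2 C : 'M[R]_n, C \in unitmx & B = C^T *m C.
Proof.
elim: n B => [|n IH] B Bpd.
  by exists 1%:M; rewrite ?unitmx1 // [B]flatmx0 [_ *m _]flatmx0.
pose a := B 0 0; pose b := dlsubmx (B : 'M_(1 + n)).
pose D := drsubmx (B : 'M_(1 + n)).
have eB : B = block_mx a%:M b^T b D := symmetric_block_mx Bpd.1.
rewrite eB in Bpd; have [a0 /IH[C' C'u eD]] := posdef_schur Bpd.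
pose s := Num.sqrt a; have s0 : 0 < s by rewrite sqrtr_gt0.
have ss : s * s = a by rewrite -expr2 sqr_sqrtr // ltW.
pose C : 'M_(1 + n) := block_mx s%:M (s^-1 *: b^T) 0 C'.
exists C.
  rewrite unitmxE (det_ublock (s%:M : 'M_1)) det_scalar1 unitrM unitfE.
  by rewrite gt_eqF //= -unitmxE.
change (B = C^T *m C); rewrite eB tr_block_mx mulmx_block.
rewrite !trmx0 !mul0mx !mulmx0 !addr0.
rewrite [(s^-1 *: _)^T]linearZ /= trmxK tr_scalar_mx -eD.
rewrite !mul_scalar_mx mul_mx_scalar scale_scalar_mx ss -scalemxAl -scalemxAr.
by rewrite !scalerA -invfM ss mulfV ?gt_eqF // !scale1r addrC subrK.
Qed.

Lemma posdef_det_gt0 {n} {K : 'M[R]_n} : posdef K -> 0 < \det K.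
Proof.
move=> /cholesky[C Cu ->]; rewrite det_mulmx det_tr -expr2 exprn_even_gt0 //=.
by rewrite -unitfE -unitmxE.
Qed.

Lemma posdef_unitmx {n} {K : 'M[R]_n} : posdef K -> K \in unitmx.
Proof. by move=> /posdef_det_gt0 dK; rewrite unitmxE unitfE gt_eqF. Qed.

Lemma posdef_inv {n} {K : 'M[R]_n} : posdef K -> posdef (invmx K).
Proof.
move=> Kpd; have Ku := posdef_unitmx Kpd.
have Vsym : (invmx K)^T = invmx K by rewrite trmx_inv Kpd.1.
split=> // x x0.
have -> : x^T *m invmx K *m x = (invmx K *m x)^T *m K *m (invmx K *m x).
  by rewrite trmx_mul Vsym -!mulmxA [K *m (_ *m _)]mulmxA mulmxV // mul1mx.
apply: Kpd.2; apply: contraNneq x0 => Vx0.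
by rewrite -(mulKVmx Ku x) Vx0 mulmx0.
Qed.

Lemma dotmx_sumsq {n} (x : 'cV[R]_n) : (x^T *m x) 0 0 = \sum_k x k 0 ^+ 2.
Proof. by rewrite mxE; apply: eq_bigr => k _; rewrite mxE expr2. Qed.

Lemma dotmx_gt0 {n} {x : 'cV[R]_n} : x != 0 -> 0 < (x^T *m x) 0 0.
Proof.
move=> x0; rewrite dotmx_sumsq lt_def sumr_ge0 ?andbT // => [|k _]; last first.
  exact: sqr_ge0.
apply: contraNneq x0 => /(psumr_eq0P (fun k _ => sqr_ge0 (x k 0))) x2_0.
apply/eqP/matrixP => k j; rewrite ord1 mxE.
by apply/eqP; rewrite -sqrf_eq0 x2_0.
Qed.

Lemma posdef1 {n} : posdef (1%:M : 'M[R]_n).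
Proof.
by split=> [|x]; rewrite ?/symmetric_mx ?trmx1 // mulmx1; apply: dotmx_gt0.
Qed.

Lemma qform_le {n} (N : 'M[R]_n) (x : 'cV[R]_n) :
  `|(x^T *m N *m x) 0 0| <= (\sum_k \sum_l `|N k l|) * (x^T *m x) 0 0.
Proof.
have xk2 k : `|x k 0| ^+ 2 <= (x^T *m x) 0 0.
  rewrite real_normK ?num_real // dotmx_sumsq (bigD1 k) //= lerDl.
  by apply: sumr_ge0 => i _; apply: sqr_ge0.
rewrite exchange_big /= mulr_suml; set y := (x^T *m x) 0 0 in xk2 *.
rewrite mxE; apply: le_trans (ler_norm_sum _ _ _) _; apply: ler_sum => l _.
rewrite mxE !mulr_suml; apply: le_trans (ler_norm_sum _ _ _) _.
apply: ler_sum => k _; rewrite mxE !normrM mulrAC mulrC ler_wpM2l //.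
have := xk2 k; have := xk2 l; have := sqr_ge0 (`|x k 0| - `|x l 0|).
rewrite sqrrB; lra.
Qed.

Lemma posdef1DZ {n} (N : 'M[R]_n) (t : R) : symmetric_mx N ->
  `|t| * (\sum_k \sum_l `|N k l|) < 1 -> posdef (1%:M + t *: N).
Proof.
move=> Nsym tN; split.
  by rewrite /symmetric_mx raddfD /= trmx1 [(_ *: N)^T]linearZ /= Nsym.
move=> x x0; set q := (x^T *m N *m x) 0 0; set y := (x^T *m x) 0 0.
have -> : (x^T *m (1%:M + t *: N) *m x) 0 0 = y + t * q.
  by rewrite mulmxDr mulmxDl mulmx1 -scalemxAr -scalemxAl mxE [X in _ + X]mxE.
have y0 : 0 < y := dotmx_gt0 x0.
have tq : `|t * q| <= `|t| * (\sum_k \sum_l `|N k l|) * y.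
  by rewrite normrM -mulrA ler_wpM2l // qform_le.
have := ler_norm (- (t * q)); rewrite normrN.
have : `|t| * (\sum_k \sum_l `|N k l|) * y < y by rewrite gtr_pMl.
lra.
Qed.

Lemma posdef_perturb {n} {K : 'M[R]_n} (H : 'M[R]_n) :
  posdef K -> symmetric_mx H ->
  exists2 delta : R, 0 < delta & forall t, `|t| < delta -> posdef (K + t *: H).
Proof.
move=> Kpd Hsym; have [C Cu eK] := cholesky Kpd.
pose N := (invmx C)^T *m H *m invmx C; pose m := \sum_k \sum_l `|N k l|.
have m0 : 0 <= m by apply: sumr_ge0 => k _; apply: sumr_ge0.
have m1 : 0 < m + 1 by lra.
exists (m + 1)^-1 => [|t]; first by rewrite invr_gt0.
rewrite -(ltr_pM2r m1) mulVf ?gt_eqF // => tm.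
have -> : K + t *: H = C^T *m (1%:M + t *: N) *m C.
  rewrite mulmxDr mulmxDl mulmx1 -eK -scalemxAr -scalemxAl /N !mulmxA.
  by rewrite -trmx_mul mulVmx // trmx1 mul1mx mulmxKV.
apply: posdef_congr Cu _; apply: posdef1DZ.
  by rewrite /symmetric_mx /N !trmx_mul trmxK Hsym mulmxA.
by apply: le_lt_trans tm; rewrite ler_wpM2l // lerDl.
Qed.

Lemma mxtrace_qform_eq0 {n} {A : 'M[R]_n} (F : 'M[R]_n) :
  posdef A -> \tr (F^T *m A *m F) = 0 -> F = 0.
Proof.
move=> [_ Apos].
have diagE k : (F^T *m A *m F) k k = ((col k F)^T *m A *m col k F) 0 0.
  by rewrite -qform_delta colE trmx_mul !mulmxA.
have diag_ge0 k : 0 <= (F^T *m A *m F) k k.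
  rewrite diagE; have [->|Fk0] := eqVneq (col k F) 0.
    by rewrite mulmx0 mxE.
  exact/ltW/Apos.
move=> /(psumr_eq0P (fun k _ => diag_ge0 k)) diag0.
apply/matrixP => i k; have [/matrixP/(_ i 0)|Fk0] := eqVneq (col k F) 0.
  by rewrite !mxE.
by have := Apos _ Fk0; rewrite -diagE diag0 ?ltxx.
Qed.

Lemma posdef_mxtrace_sandwich_eq0 {n} {A B : 'M[R]_n} (D : 'M[R]_n) :
  posdef A -> posdef B -> symmetric_mx D ->
  \tr (A *m D *m B *m D) = 0 -> D = 0.
Proof.
move=> Apd Bpd Dsym; have [C Cu ->] := cholesky Bpd.
have -> : \tr (A *m D *m (C^T *m C) *m D)
          = \tr ((D *m C^T)^T *m A *m (D *m C^T)).
  by rewrite !mulmxA -mulmxA mxtrace_mulC trmx_mul trmxK Dsym !mulmxA.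
move=> /(mxtrace_qform_eq0 _ Apd) DC0.
have CTu : C^T \in unitmx by rewrite unitmx_tr.
by rewrite -[D](mulmxK CTu) DC0 mul0mx.
Qed.

End PositiveDefinite.

Lemma horner_char_poly (R : comNzRingType) n (A : 'M[R]_n) (a : R) :
  (char_poly A).[a] = \det (a%:M - A).
Proof.
rewrite -horner_evalE /char_poly -det_map_mx; congr (\det _).
by apply/matrixP => i j; rewrite !mxE raddfB raddfMn /= /horner_eval !hornerE.
Qed.

Lemma det1DZ_char_poly (R : fieldType) n (M : 'M[R]_n) (t : R) : t != 0 ->
  \det (1%:M + t *: M) = t ^+ n * (char_poly (- M)).[t^-1].
Proof.
move=> t0; rewrite horner_char_poly opprK -detZ scalerDr scale_scalar_mx.
by rewrite mulfV.
Qed.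

Lemma det1DZ_expansion {R : numFieldType} {n} (M : 'M[R]_n) : exists B : R,
  forall t, `|t| <= 1 -> exists2 r, `|r| <= B &
    \det (1%:M + t *: M) = 1 + t * \tr M + t ^+ 2 * r.
Proof.
case: n M => [|n] M.
  exists 0 => t _; exists 0; rewrite ?normr0 //.
  by rewrite det_mx00 [\tr M]big_ord0 !mulr0 !addr0.
pose p := char_poly (- M).
have p_lead : p`_n.+1 = 1.
  by have /monicP := char_poly_monic (- M); rewrite lead_coefE size_char_poly.
have p_tr : p`_n = \tr M by rewrite char_poly_trace // raddfN opprK.
exists (\sum_(i < n) `|p`_i|) => t t1.
exists (\sum_(i < n) p`_i * t ^+ (n - i.+1)).
  apply: le_trans (ler_norm_sum _ _ _) _; apply: ler_sum => i _.
  by rewrite normrM normrX ler_piMr // exprn_ile1.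
have [->|t0] := eqVneq t 0.
  by rewrite scale0r addr0 det1 mul0r expr0n !mul0r !addr0.
have tn k : t ^+ k != 0 by rewrite expf_neq0.
have low_terms (i : 'I_n) :
    t ^+ n.+1 * (p`_i * t^-1 ^+ i) = t ^+ 2 * (p`_i * t ^+ (n - i.+1)).
  have -> : n.+1 = ((n - i.+1) + i + 2)%N by have := ltn_ord i; lia.
  by rewrite !exprD exprVn; field.
have trace_term : t ^+ n.+1 * (\tr M * t^-1 ^+ n) = t * \tr M.
  by rewrite exprS exprVn; field.
have lead_term : t ^+ n.+1 * (1 * t^-1 ^+ n.+1) = 1.
  by rewrite exprVn; field.
rewrite det1DZ_char_poly // horner_coef size_char_poly -/p 2!big_ord_recr /=.
rewrite p_lead p_tr !mulrDr trace_term lead_term mulr_sumr.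
rewrite (eq_bigr _ (fun i _ => low_terms i)) -mulr_sumr; ring.
Qed.

Lemma le0_of_small_mul (R : realFieldType) (x C delta : R) : 0 < delta ->
  (forall e, 0 < e < delta -> x <= e * C) -> x <= 0.
Proof.
move=> d0 xC; apply/ler_addgt0Pr => e e0; rewrite add0r.
have C1 : 0 < `|C| + 1 by rewrite ltr_wpDl.
pose e' := Num.min (delta / 2) (e / (`|C| + 1)).
have e'0 : 0 < e' by rewrite lt_min divr_gt0 //= divr_gt0.
have e'd : e' < delta by rewrite gt_min; apply/orP; left; lra.
have e'e : e' * (`|C| + 1) <= e by rewrite -ler_pdivlMr // ge_min lexx orbT.
apply: le_trans (xC e' _) _; first by rewrite e'0.
have := ler_norm C; have := ler_wpM2l (ltW e'0) (ler_norm C); nra.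
Qed.

Lemma eq_of_small_slope (R : realFieldType) (a b delta C : R) : 0 < delta ->
  (forall t, `|t| < delta -> t * (a - b) <= t ^+ 2 * C) -> a = b.
Proof.
move=> d0 slope; apply/eqP; rewrite -subr_eq0 -normr_le0.
apply: (@le0_of_small_mul _ _ C _ d0) => e /andP[e0 ed].
have := slope (- e); have := slope e; rewrite normrN sqrrN gtr0_norm // expr2.
move=> /(_ ed) up /(_ ed) down; rewrite -(ler_pM2l e0) mulrA.
by have [ab0|ab0] := lerP 0 (a - b);
  [rewrite ger0_norm | rewrite ltr0_norm]; lra.
Qed.

Lemma subr1_le_mul_ln {R : realType} {y : R} : 0 < y -> y - 1 <= y * ln y.
Proof.
move=> y0; have yV1 : -1 < y^-1 - 1 by rewrite ltrBrDr addNr invr_gt0.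
have := le_ln1Dx yV1; rewrite [1 + _]addrC subrK lnV ?posrE //.
move=> /(ler_wpM2l (ltW y0)); rewrite mulrBr mulfV ?gt_eqF //; lra.
Qed.

Lemma ln_det_stationary {R : realType} {n} {K H : 'M[R]_n} {b delta : R} :
  K \in unitmx -> 0 < \det K -> 0 < delta ->
  (forall t, `|t| < delta -> 0 < \det (K + t *: H) /\
     ln (\det (K + t *: H)) <= ln (\det K) + t * b) ->
  \tr (invmx K *m H) = b.
Proof.
move=> Ku dK d0 ln_le; set M := invmx K *m H; set a := \tr M.
have [B expand] := det1DZ_expansion M.
have eK t : K + t *: H = K *m (1%:M + t *: M).
  by rewrite mulmxDr mulmx1 -scalemxAr mulKVmx.
pose C := `|a * b| + `|b| * `|B| + `|B|.
apply: (@eq_of_small_slope _ _ _ (Num.min delta 1) C).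
  by rewrite lt_min d0 ltr01.
move=> t; rewrite lt_min => /andP[td t1].
have [r rB dE] := expand t (ltW t1); have [dpos lnle] := ln_le t td.
rewrite eK det_mulmx dE in dpos lnle.
set y := 1 + t * a + t ^+ 2 * r in dE dpos lnle.
have y0 : 0 < y by rewrite pmulr_rgt0 in dpos.
rewrite lnM ?posrE // lerD2l in lnle.
have : y - 1 <= y * (t * b).
  by apply: le_trans (subr1_le_mul_ln y0) _; rewrite ler_wpM2l // ltW.
have -> : y * (t * b) =
    y - 1 + (t ^+ 2 * (a * b + t * b * r - r) - t * (a - b)).
  by rewrite /y; ring.
rewrite lerDl subr_ge0 => /le_trans; apply; rewrite ler_wpM2l ?sqr_ge0 //.
have tr : `|t| * `|r| <= `|B|.
  rewrite -[`|B|]mul1r; apply: ler_pM => //; first exact: ltW.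
  exact: le_trans rB (ler_norm B).
have tbr : `|t * b * r| <= `|b| * `|B|.
  by rewrite !normrM mulrAC mulrC ler_wpM2l.
have := ler_norm (a * b); have := ler_norm (t * b * r); have := ler_norm (- r).
rewrite normrN /C; have := le_trans rB (ler_norm B); lra.
Qed.

Section PenaltyEntry.
Context {R : realType}.
Implicit Types (l u : \bar R) (x h : R).
Local Open Scope ereal_scope.

Definition pen_entry l u x : \bar R := Order.max (l * x%:E) (u * x%:E).

Definition active_bound l u x : \bar R := if (x < 0)%R then l else u.

Lemma pen_entry_ge0 l u x : l <= 0 -> 0 <= u -> 0 <= pen_entry l u x.
Proof.
move=> l0 u0; rewrite le_max; have [x0|x0] := lerP 0%R x.
  by apply/orP; right; apply: mule_ge0; rewrite ?lee_fin.
by apply/orP; left; apply: mule_le0; rewrite // lee_fin ltW.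
Qed.

Lemma pen_entry_active l u x : l <= 0 -> 0 <= u ->
  pen_entry l u x = active_bound l u x * x%:E.
Proof.
move=> l0 u0; rewrite /pen_entry /active_bound; have [x0|x0] := ltrP x 0.
  apply/max_idPl; apply: (@le_trans _ _ 0).
    by apply: mule_ge0_le0; rewrite // lee_fin ltW.
  by apply: mule_le0; rewrite // lee_fin ltW.
by apply/max_idPr; apply: (@le_trans _ _ 0);
  [apply: mule_le0_ge0 | apply: mule_ge0]; rewrite ?lee_fin.
Qed.

Lemma active_bound_fin_num {l u x} : l <= 0 -> 0 <= u -> x != 0%R ->
  pen_entry l u x \is a fin_num -> active_bound l u x \is a fin_num.
Proof.
move=> l0 u0 x0; rewrite pen_entry_active // /active_bound.
have [xneg|xpos] := ltrP x 0.
  by case: l l0 => [r| |] //=; rewrite mulNyr ltr0_sg // mulN1e.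
have {xpos} xpos : (0 < x)%R by rewrite lt_neqAle eq_sym x0.
by case: u u0 => [r| |] //=; rewrite mulyr gtr0_sg // mul1e.
Qed.

Lemma pen_entry_shift l u x h : l <= 0 -> 0 <= u -> x != 0%R ->
  pen_entry l u x \is a fin_num -> (`|h| < `|x|)%R ->
  pen_entry l u (x + h) = pen_entry l u x + (fine (active_bound l u x) * h)%:E.
Proof.
move=> l0 u0 x0 fin hx.
have same_sign : (x + h < 0)%R = (x < 0)%R.
  have := ler_norm h; have := ler_norm (- h); rewrite normrN.
  by have [xn|xp] := ltrP x 0;
    [rewrite (ltr0_norm xn) in hx | rewrite (ger0_norm xp) in hx];
    move=> *; apply/idP/idP; lra.
rewrite !pen_entry_active // {1}/active_bound same_sign -/(active_bound l u x).
have /fineK <- := active_bound_fin_num l0 u0 x0 fin.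
by rewrite /= -!EFinM -EFinD mulrDr.
Qed.

End PenaltyEntry.

Lemma mxtrace_mul_delta (R : comNzRingType) n (A : 'M[R]_n) i j :
  \tr (A *m delta_mx i j) = A j i.
Proof.
rewrite /mxtrace (bigD1 j) //= big1 ?addr0 => [|k kj]; rewrite mxE.
  rewrite (bigD1 i) //= big1 ?addr0 => [|l li]; rewrite mxE.
    by rewrite !eqxx mulr1.
  by rewrite (negbTE li) mulr0.
by rewrite big1 // => l _; rewrite mxE (negbTE kj) andbF mulr0.
Qed.

Lemma sum_offdiag_delta (R : comNzRingType) n (c : 'I_n -> 'I_n -> R) i j :
  \sum_k \sum_(l | k != l) c k l * delta_mx i j k l = (i != j)%:R * c i j.
Proof.
rewrite (bigD1 i) //= [X in _ + X]big1 ?addr0 => [|k ki]; last first.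
  by rewrite big1 // => l _; rewrite mxE (negbTE ki) mulr0.
rewrite (eq_bigr (fun l => c i l * (l == j)%:R)) => [|l _]; last first.
  by rewrite mxE eqxx.
have [<-|ij] := eqVneq i j.
  by rewrite mul0r big1 // => l il; rewrite eq_sym (negbTE il) mulr0.
rewrite (bigD1 j) //= eqxx mulr1 mul1r big1 ?addr0 // => l /andP[_ lj].
by rewrite (negbTE lj) mulr0.
Qed.

Section Penalty.
Context {R : realType} {d : nat} (L U : 'M[\bar R]_d).
Local Open Scope ereal_scope.

Definition penalty (X : 'M[R]_d) : \bar R :=
  \sum_(i < d) \sum_(j < d | i != j) pen_entry (L i j) (U i j) (X i j).

Definition active_slope (X : 'M[R]_d) k l : R :=
  fine (active_bound (L k l) (U k l) (X k l)).

Lemma pen_objE (S X : 'M[R]_d) :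
  pen_obj S L U X = (- ln (\det X) + \tr (S *m X))%:E + penalty X.
Proof. by []. Qed.

Lemma penalty1 : penalty 1%:M = 0.
Proof.
rewrite /penalty big1 // => i _; rewrite big1 // => j ij.
by rewrite /pen_entry mxE (negbTE ij) mule0 mule0 maxxx.
Qed.

Lemma penalty_fin_num_entry {X k l} : penalty X \is a fin_num -> k != l ->
  pen_entry (L k l) (U k l) (X k l) \is a fin_num.
Proof.
move=> /sum_fin_numP/(_ k (mem_index_enum k) isT)/sum_fin_numP Xfin kl.
exact: Xfin l (mem_index_enum l) kl.
Qed.

Hypothesis LU_sign : forall i j, i != j -> L i j <= 0 /\ 0 <= U i j.

Lemma penalty_ge0 X : 0 <= penalty X.
Proof.
apply: sume_ge0 => i _; apply: sume_ge0 => j ij.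
by have [l0 u0] := LU_sign _ _ ij; apply: pen_entry_ge0.
Qed.

Lemma penalty_shift {K H : 'M[R]_d} {delta t : R} :
  penalty K \is a fin_num ->
  (forall k l, k != l -> H k l != 0%R -> (delta * `|H k l| <= `|K k l|)%R) ->
  (`|t| < delta)%R ->
  penalty (K + t *: H) = penalty K +
    (t * \sum_k \sum_(l | k != l) active_slope K k l * H k l)%:E.
Proof.
move=> Kfin HK td; rewrite mulr_sumr -sumEFin -big_split; apply: eq_bigr => k _.
rewrite mulr_sumr -sumEFin -big_split; apply: eq_bigr => l kl.
rewrite !mxE; have [->|Hkl0] := eqVneq (H k l) 0%R.
  by rewrite !mulr0 addr0 /= adde0.
have [l0 u0] := LU_sign _ _ kl.
have tHK : (`|t| * `|H k l| < `|K k l|)%R.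
  by apply: lt_le_trans (HK k l kl Hkl0); rewrite ltr_pM2r ?normr_gt0.
rewrite pen_entry_shift //; first by rewrite mulrCA.
- by rewrite -normr_gt0 (le_lt_trans _ tHK) // mulr_ge0.
- exact: penalty_fin_num_entry.
- by rewrite normrM.
Qed.

End Penalty.

Section Minimizer.
Context {R : realType} {d : nat}.
Context (S : 'M[R]_d) (L U : 'M[\bar R]_d) (K : 'M[R]_d).
Hypothesis LU_sign : forall i j, i != j -> (L i j <= 0)%E /\ (0 <= U i j)%E.
Hypothesis Kpd : posdef K.
Hypothesis Kmin : forall X, posdef X -> (pen_obj S L U K <= pen_obj S L U X)%E.

Lemma minimizer_penalty_fin_num : penalty L U K \is a fin_num.
Proof.
have := Kmin _ posdef1; rewrite !pen_objE penalty1 adde0.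
have := penalty_ge0 _ _ LU_sign K; case: (penalty L U K) => //.
Qed.

Lemma minimizer_first_order (H : 'M[R]_d) (delta : R) :
  symmetric_mx H -> 0 < delta ->
  (forall k l, k != l -> H k l != 0 -> delta * `|H k l| <= `|K k l|) ->
  \tr (invmx K *m H) = \tr (S *m H) +
    \sum_k \sum_(l | k != l) active_slope L U K k l * H k l.
Proof.
move=> Hsym d0 HK; set s := \sum_k _.
have [delta' d'0 Xpd] := posdef_perturb H Kpd Hsym.
have dd' : 0 < Num.min delta delta' by rewrite lt_min d0 d'0.
apply: (ln_det_stationary (posdef_unitmx Kpd) (posdef_det_gt0 Kpd) dd').
move=> t; rewrite lt_min => /andP[td td']; have X_pd := Xpd t td'.
split; first exact: posdef_det_gt0.
have := Kmin _ X_pd; rewrite !pen_objE.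
rewrite (penalty_shift _ _ LU_sign minimizer_penalty_fin_num HK td).
rewrite [penalty L U K + _]addeC addeA -EFinD.
rewrite leeD2rE ?minimizer_penalty_fin_num //.
rewrite lee_fin -/s mulmxDr -scalemxAr mxtraceD mxtraceZ; lra.
Qed.

Lemma minimizer_inv_diag i : invmx K i i = S i i.
Proof.
have := minimizer_first_order (delta_mx i i) 1.
rewrite !mxtrace_mul_delta sum_offdiag_delta eqxx mul0r addr0; apply=> //.
  by rewrite /symmetric_mx trmx_delta.
move=> k l kl; rewrite mxE.
by case: (k =P i) (l =P i) kl => [-> | _] [-> | _] //=; rewrite eqxx.
Qed.

Hypotheses (Ssym : symmetric_mx S) (Lsym : symmetric_mx L).
Hypothesis Usym : symmetric_mx U.

Lemma minimizer_inv_offdiag i j : i != j -> K i j != 0 ->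
  ((invmx K i j)%:E = (S i j)%:E + active_bound (L i j) (U i j) (K i j))%E.
Proof.
move=> ij Kij; pose H : 'M[R]_d := delta_mx i j + delta_mx j i.
pose c := active_slope L U K.
have Vsym : symmetric_mx (invmx K) by rewrite /symmetric_mx trmx_inv Kpd.1.
have Hsym : symmetric_mx H by rewrite /symmetric_mx raddfD /= !trmx_delta addrC.
have H_support k l : k != l -> H k l != 0 -> `|K i j| * `|H k l| <= `|K k l|.
  move=> _; rewrite !mxE.
  have [/andP[/eqP-> /eqP->] _|nij] := boolP ((k == i) && (l == j)).
    by rewrite (negbTE ij) addr0 normr1 mulr1.
  have [/andP[/eqP-> /eqP->] _|nji] := boolP ((k == j) && (l == i)).
    by rewrite mulr0n mulr1n add0r normr1 mulr1 (symmetric_mxE Kpd.1).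
  by rewrite addr0 eqxx.
have c_sym : c j i = c i j.
  by rewrite /c /active_slope (symmetric_mxE Lsym) (symmetric_mxE Usym)
    (symmetric_mxE Kpd.1).
have sumH : \sum_k \sum_(l | k != l) c k l * H k l = c i j + c j i.
  rewrite (eq_bigr (fun k => \sum_(l | k != l)
      (c k l * delta_mx i j k l + c k l * delta_mx j i k l))) => [|k _];
    last first.
    by apply: eq_bigr => l _; rewrite mxE mulrDr.
  under eq_bigr do rewrite big_split.
  by rewrite big_split /= !sum_offdiag_delta ij eq_sym ij !mul1r.
have := minimizer_first_order H `|K i j| Hsym _ H_support.
rewrite normr_gt0 Kij sumH /H !mulmxDr !mxtraceD !mxtrace_mul_delta c_sym.
rewrite (symmetric_mxE Vsym) (symmetric_mxE Ssym) => /(_ isT) eq2.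
have /fineK <- := active_bound_fin_num (LU_sign _ _ ij).1 (LU_sign _ _ ij).2 Kij
  (penalty_fin_num_entry _ _ minimizer_penalty_fin_num ij).
by rewrite -EFinD -/(active_slope L U K i j) -/c; congr (_%:E); lra.
Qed.

Hypothesis LU_diag : forall i, L i i = 0%E /\ U i i = 0%E.

Lemma minimizer_inv_adjusted_stat i j : (i == j) || support_graph K i j ->
  (invmx K i j)%:E = adjusted_stat S L U K i j.
Proof.
case/orP => [/eqP <- | /andP[ij Kij]].
  rewrite minimizer_inv_diag /adjusted_stat ltNge.
  by rewrite (ltW (posdef_diag_gt0 Kpd i)) /= (LU_diag i).2 adde0.
by rewrite minimizer_inv_offdiag // /adjusted_stat /active_bound; case: ifP.
Qed.

Lemma minimizer_ggm_mle : ggm_mle (support_graph K) (adjusted_stat S L U K) K.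
Proof.
split=> // [i j ij|]; last exact: minimizer_inv_adjusted_stat.
by rewrite /support_graph ij negbK => /eqP.
Qed.

End Minimizer.

Lemma ggm_mle_unique {R : realType} {d} (G : 'I_d -> 'I_d -> bool)
    (Sh : 'I_d -> 'I_d -> \bar R) (K1 K2 : 'M[R]_d) :
  ggm_mle G Sh K1 -> ggm_mle G Sh K2 -> K1 = K2.
Proof.
move=> [K1pd K1z K1s] [K2pd K2z K2s]; apply/eqP; rewrite -subr_eq0; apply/eqP.
set D := K1 - K2; set V1 := invmx K1; set V2 := invmx K2.
have Dsym : symmetric_mx D by rewrite /symmetric_mx raddfB /= K1pd.1 K2pd.1.
have inv_diff : V1 - V2 = - (V1 *m D *m V2).
  rewrite mulmxBr mulmxBl mulVmx ?posdef_unitmx // mul1mx -mulmxA.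
  by rewrite mulmxV ?posdef_unitmx // mulmx1 opprB.
have : \tr ((V1 - V2) *m D) = 0.
  rewrite /mxtrace big1 // => k _; rewrite mxE big1 // => l _.
  have [kl|nkl] := boolP ((k == l) || G k l).
    have V12 : V1 k l = V2 k l by apply: EFin_inj; rewrite K1s ?K2s.
    by rewrite !mxE V12 subrr mul0r.
  move: nkl; rewrite negb_or => /andP[kl nGkl].
  by rewrite (symmetric_mxE Dsym) !mxE K1z ?K2z ?subrr ?mulr0.
rewrite inv_diff mulNmx raddfN /= => /eqP; rewrite oppr_eq0 => /eqP.
exact: posdef_mxtrace_sandwich_eq0 (posdef_inv K1pd) (posdef_inv K2pd) Dsym.
Qed.

Theorem corollary8p10 (R : realType) (d : nat) (S : 'M[R]_d)
  (L U : 'M[\bar R]_d) (Khat : 'M[R]_d) :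
  psd S -> symmetric_mx L -> symmetric_mx U ->
  (forall i j : 'I_d, i != j -> (L i j <= 0)%E /\ (0 <= U i j)%E) ->
  (forall i : 'I_d, L i i = 0%E /\ U i i = 0%E) ->
  posdef Khat ->
  (forall K : 'M[R]_d, posdef K -> (pen_obj S L U Khat <= pen_obj S L U K)%E) ->
  ggm_mle (support_graph Khat) (adjusted_stat S L U Khat) Khat /\
  (forall K : 'M[R]_d,
     ggm_mle (support_graph Khat) (adjusted_stat S L U Khat) K -> K = Khat).
Proof.
move=> [Ssym _] Lsym Usym LU_sign LU_diag Kpd Kmin.
have Kmle :=
  minimizer_ggm_mle S L U Khat LU_sign Kpd Kmin Ssym Lsym Usym LU_diag.
by split=> // K Kmle'; apply: ggm_mle_unique Kmle' Kmle.
Qed.
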